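(* Let $(T,\mathcal{V})$ be a tree decomposition of a graph $G$. For every node $t\in V(T)$, let $\mathscr{C}(t)$ be a set of cycles of $G$ each of which is fenced by $V_t$ but is not contained in $G[V_t]$ (i.e. its vertex set is not a subset of $V_t$). If $\mathscr{C}(t)\neq\emptyset$ for every node $t\in V(T)$, then there exist an edge $tt'\in E(T)$ and cycles $C\in\mathscr{C}(t)$ and $D\in\mathscr{C}(t')$ such that $\mathrm{Br}_t(C)=\mathrm{Br}_t(t')$ and $\mathrm{Br}_{t'}(D)=\mathrm{Br}_{t'}(t)$.
   Context: A tree decomposition of $G$ is a pair $(T,\mathcal{V})$ where $T$ is a tree and $\mathcal{V}=\{V_t : t\in V(T)\}$ is a collection of subsets (bags) of $V(G)$ such that every vertex of $G$ lies in some bag, every edge of $G$ has both ends in some bag, and for every vertex $v$ the set of nodes whose bags contain $v$ induces a connected subtree of $T$. For $S\subseteq V(G)$, $S$ separates a set $X$ of vertices if two vertices of $X$ lie in different components of $G-S$. A path or cycle $C'$ crosses $S$ if $S$ separates $V(C')$; otherwise $S$ fences $C'$. For distinct nodes $t,t'$, $\mathrm{Br}_t(t')$ denotes the component of $T-t$ containing $t'$. For a vertex $v\notin V_t$, $\mathrm{Br}_t(v)$ is the component of $T-t$ containing the nodes whose bags contain $v$. For a path or cycle $C'$ fenced by $V_t$ with $V(C')\not\subseteq V_t$, all $v\in V(C')\setminus V_t$ have the same $\mathrm{Br}_t(v)$, denoted $\mathrm{Br}_t(C')$. *)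

From mathcomp Require Import all_boot.
Set Implicit Arguments. Unset Strict Implicit. Unset Printing Implicit Defensive.

Definition simple_graph (V : finType) (e : rel V) : Prop :=
  symmetric e /\ irreflexive e.

Definition is_tree (N : finType) (tE : rel N) : Prop :=
  [/\ simple_graph tE, 0 < #|N|,
      (forall a b : N, connect tE a b) &
      (forall c : seq N, uniq c -> 3 <= size c -> ~~ cycle tE c)].

Definition is_cycle (V : finType) (e : rel V) (c : seq V) : Prop :=
  [/\ uniq c, 3 <= size c & cycle e c].

Definition tree_decomposition (V N : finType) (e : rel V) (tE : rel N)
    (B : N -> {set V}) : Prop :=
  [/\ is_tree tE,
      (forall v : V, exists t : N, v \in B t),
      (forall u v : V, e u v -> exists t : N, (u \in B t) && (v \in B t)) &
      (forall (v : V) (t1 t2 : N), v \in B t1 -> v \in B t2 ->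
          connect [rel a b | [&& tE a b, v \in B a & v \in B b]] t1 t2)].

Definition del_rel (V : finType) (e : rel V) (S : {set V}) : rel V :=
  [rel a b | [&& e a b, a \notin S & b \notin S]].

Definition separates (V : finType) (e : rel V) (S : {set V}) (X : seq V) : Prop :=
  exists x y : V, [/\ x \in X, y \in X, x \notin S, y \notin S &
                      ~~ connect (del_rel e S) x y].

Definition fences (V : finType) (e : rel V) (S : {set V}) (C : seq V) : Prop :=
  ~ separates e S C.

Definition Br (N : finType) (tE : rel N) (t t' : N) : {set N} :=
  [set s | (s != t) && connect (del_rel tE [set t]) t' s].

(* Br_t(v) for v not in V_t: the component of T - t containing the nodes
   whose bags contain v. *)
Definition Brv (V N : finType) (tE : rel N) (B : N -> {set V}) (t : N) (v : V)
    : {set N} :=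
  [set s | (s != t) &&
     [exists s0, (v \in B s0) && connect (del_rel tE [set t]) s0 s]].

(* Br_t(C) = X : every vertex v of C outside V_t has Br_t(v) = X. *)
Definition BrC_eq (V N : finType) (tE : rel N) (B : N -> {set V}) (t : N)
    (C : seq V) (X : {set N}) : Prop :=
  forall v : V, v \in C -> v \notin B t -> Brv tE B t v = X.

(* For each node t pick a cycle C of 𝒞(t) and a vertex v of C outside V_t.
   Since V_t fences C, all vertices of C outside V_t lie in one component of
   G - V_t, and an edge of G inside G - V_t lies in a bag avoiding t, so
   Br_t(C) = Br_t(v) is the branch of T - t containing a bag of v; it is
   Br_t(t') for the neighbour t' of t through which that bag is reached.
   This gives a map t |-> t' sending every node to a neighbour; iterating it
   reaches a periodic orbit, which cannot have length 1 (T has no loops) nor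
   length >= 3 (T has no cycles), so some t satisfies t'' = t. *)
From Stdlib Require Import ClassicalEpsilon.
From mathcomp Require Import all_boot.
Set Implicit Arguments. Unset Strict Implicit. Unset Printing Implicit Defensive.

Lemma exists_fcycle_orbit (T : finType) (f : T -> T) (x : T) :
  exists y, fcycle f (orbit f y).
Proof.
move: {2}(order f x) (leqnn (order f x)) => n.
elim: n x => [|n IHn] x le_ord_n.
  by move: (order_gt0 f x); rewrite leqn0 in le_ord_n; rewrite (eqP le_ord_n).
case: (orderPcycle f x) => [cyc_x _|_ ord_fx]; first by exists x.
by apply: (IHn (f x)); rewrite -ltnS -ord_fx.
Qed.

Lemma acyclic_neighbour_map_2cycle (T : finType) (r : rel T) (f : T -> T)
    (x : T) :
  irreflexive r ->
  (forall c : seq T, uniq c -> 3 <= size c -> ~~ cycle r c) ->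
  (forall t, r t (f t)) ->
  exists t, f (f t) = t.
Proof.
move=> irr_r acyclic_r r_f.
have [y cyc_y] := exists_fcycle_orbit f x.
have r_cyc_y : cycle r (orbit f y) by apply: sub_cycle cyc_y => a b /eqP <-.
case ord_y: (order f y) cyc_y => [|[|[|k]]] cyc_y.
- by move: (order_gt0 f y); rewrite ord_y.
- move: cyc_y; rewrite /orbit ord_y /= andbT => /eqP fy.
  by move: (r_f y); rewrite fy irr_r.
- move: cyc_y; rewrite /orbit ord_y /= andbT => /andP [_ /eqP ffy].
  by exists y.
- have := acyclic_r _ (orbit_uniq f y).
  by rewrite size_orbit ord_y r_cyc_y => /(_ isT).
Qed.

Lemma connect_del_rel_sym (T : finType) (r : rel T) (S : {set T}) :
  symmetric r -> connect_sym (del_rel r S).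
Proof.
move=> sym_r; apply: sym_connect_sym => a b /=.
by rewrite /del_rel /= [r a b]sym_r [X in _ && X]andbC.
Qed.

Lemma connect_last_neighbour (T : finType) (r : rel T) (a t : T) :
  a != t -> connect r a t ->
  exists t', r t' t /\ connect (del_rel r [set t]) a t'.
Proof.
move=> neq_at /connectP [p r_p t_last].
elim: p a neq_at r_p t_last => [|y p IHp] a neq_at /=.
  by move=> _ eq_at; rewrite eq_at eqxx in neq_at.
case/andP=> r_ay r_p t_last.
have [eq_yt|neq_yt] := eqVneq y t; first by exists a; rewrite connect0 -eq_yt.
have [t' [r_t' a_t']] := IHp y neq_yt r_p t_last; exists t'; split=> //.
apply: connect_trans a_t'; apply: connect1.
by rewrite /del_rel /= r_ay !inE neq_at neq_yt.
Qed.

Section TreeDecomposition.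

Variables (V N : finType) (e : rel V) (tE : rel N) (B : N -> {set V}).

Hypothesis edge_in_bag : forall u v : V, e u v -> exists t, (u \in B t) && (v \in B t).
Hypothesis bags_connected : forall (v : V) (t1 t2 : N), v \in B t1 -> v \in B t2 ->
  connect [rel a b | [&& tE a b, v \in B a & v \in B b]] t1 t2.

Lemma bags_connect_del t v s1 s2 : v \notin B t -> v \in B s1 -> v \in B s2 ->
  connect (del_rel tE [set t]) s1 s2.
Proof.
move=> vNt v_s1 v_s2; apply: connect_sub (bags_connected v_s1 v_s2).
move=> a b /and3P [ab v_a v_b]; apply: connect1; rewrite /del_rel /= ab !inE /=.
by apply/andP; split; apply: (contraNneq _ vNt) => <-.
Qed.

Lemma Brv_from_bag t v s : v \notin B t -> v \in B s ->
  Brv tE B t v = [set x | (x != t) && connect (del_rel tE [set t]) s x].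
Proof.
move=> vNt v_s; apply/setP => x; rewrite !inE; case: (x != t) => //=.
apply/existsP/idP => [[s' /andP [v_s' s'x]]|sx]; last by exists s; rewrite v_s.
exact: connect_trans (bags_connect_del vNt v_s v_s') s'x.
Qed.

Lemma Brv_connect_del t u w : connect (del_rel e (B t)) u w -> u \notin B t ->
  Brv tE B t u = Brv tE B t w.
Proof.
case/connectP=> p; elim: p u => [|y p IHp] u /=; first by move=> _ ->.
case/andP=> /and3P [uy uNt yNt] path_p w_last _.
rewrite -(IHp y path_p w_last yNt).
have [s /andP [u_s y_s]] := edge_in_bag uy.
by rewrite (Brv_from_bag uNt u_s) (Brv_from_bag yNt y_s).
Qed.

Hypotheses (sym_tE : symmetric tE) (tE_connected : forall a b : N, connect tE a b).
Hypothesis bag_cover : forall v : V, exists t, v \in B t.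

Lemma fenced_BrC_neighbour t (C : seq V) :
  fences e (B t) C -> ~ {subset C <= B t} ->
  exists t', tE t t' /\ BrC_eq tE B t C (Br tE t t').
Proof.
move=> fenced_C C_not_in_t.
have [v vC vNt] : exists2 v, v \in C & v \notin B t.
  apply/hasP; apply: contra_notT C_not_in_t => /hasPn C_in_t z /C_in_t.
  by rewrite negbK.
have [s v_s] := bag_cover v.
have neq_st : s != t by apply: (contraNneq _ vNt) => <-.
have [t' [t't st']] := connect_last_neighbour neq_st (tE_connected s t).
exists t'; split; first by rewrite sym_tE.
move=> w wC wNt.
have vw : connect (del_rel e (B t)) v w.
  by apply/negPn/negP => vNw; apply: fenced_C; exists v, w.
rewrite -(Brv_connect_del vw vNt) (Brv_from_bag vNt v_s).
apply/setP => x; rewrite !inE.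
by rewrite (same_connect (connect_del_rel_sym _ sym_tE) st').
Qed.

End TreeDecomposition.

Theorem lemma5p3 (V N : finType) (e : rel V) (tE : rel N) (B : N -> {set V})
  (Cs : N -> seq V -> Prop) :
  simple_graph e ->
  tree_decomposition e tE B ->
  (forall (t : N) (C : seq V), Cs t C ->
     [/\ is_cycle e C, fences e (B t) C & ~ {subset C <= B t}]) ->
  (forall t : N, exists C : seq V, Cs t C) ->
  exists (t t' : N) (C D : seq V),
    [/\ tE t t', Cs t C, Cs t' D,
        BrC_eq tE B t C (Br tE t t') & BrC_eq tE B t' D (Br tE t' t)].
Proof.
move=> _ [[[sym_tE irr_tE] /card_gt0P [t0 _] tE_connected acyclic_tE]
          bag_cover edge_in_bag bags_connected] Cs_fenced Cs_nonempty.
have neighbour_branch t :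
    exists t', tE t t' /\ exists C, Cs t C /\ BrC_eq tE B t C (Br tE t t').
  have [C C_t] := Cs_nonempty t; have [_ fenced_C C_not_in_t] := Cs_fenced t C C_t.
  have [t' [tt' BrC]] := fenced_BrC_neighbour edge_in_bag bags_connected sym_tE
    tE_connected bag_cover fenced_C C_not_in_t.
  by exists t'; split=> //; exists C.
have [f f_spec] := choice _ neighbour_branch.
have [t fft] := acyclic_neighbour_map_2cycle t0 irr_tE acyclic_tE
  (fun t => proj1 (f_spec t)).
have [tft [C [C_t BrC]]] := f_spec t; have [_ [D [D_ft BrD]]] := f_spec (f t).
by exists t, (f t), C, D; rewrite fft in BrD.
Qed.
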